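(* Let $P$ be a definite objective condition on natural numbers. If every accessible natural number satisfies $P$, then there is a huge (i.e. non-accessible) natural number satisfying $P$.
   Context: The framework is a mathematics of finite sets with an undefined predicate ''accessible'' on natural numbers obeying: $0$ and $1$ are accessible; sums and products of accessible numbers are accessible; every number less than an accessible number is accessible; there exist numbers that are not accessible (called huge). Only finite sets are sets; the class of accessible numbers is a proper class contained in a finite set $[0..N]$ for any huge $N$. A condition is objective if it is specified without using the notion of accessibility, and definite if all its quantifiers are bounded by sets (for natural numbers, of the form $\forall x\le n$ or $\exists x\le n$). Axiom (objective separation): every subclass of a set defined by an objective definite condition is a set. *)

(* The framework's natural numbers cannot be Rocq's [nat]:
   Rocq's unrestricted induction would make every "accessible" predicate
   (contains 0, closed under successor) exhaust [nat], contradicting the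
   existence of huge numbers.  So the natural numbers are an abstract
   structure satisfying the usual objective arithmetic that the axioms of the
   framework provide: Robinson's Q together with induction for objective
   definite (= bounded, accessibility-free) conditions (IDelta0), which is
   what objective separation for subsets [0..n] yields.  "accessible" is an
   undefined predicate on this structure obeying the stated axioms. *)

Record ArithModel := {
  car  : Type;
  zero : car;
  one  : car;
  add  : car -> car -> car;
  mul  : car -> car -> car
}.

Arguments zero {_}. Arguments one {_}. Arguments add {_} _ _. Arguments mul {_} _ _.

Definition le (M : ArithModel) (x y : car M) : Prop := exists z, add z x = y.

(* Syntax of objective conditions: the language of arithmetic, with no
   symbol for accessibility.  Variables are de Bruijn indices. *)
Inductive term : Type :=
| tvar  : nat -> term
| tzero : term
| tone  : term
| tadd  : term -> term -> term
| tmul  : term -> term -> term.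

(* Definite formulas: all quantifiers are bounded, [forall x <= t] and
   [exists x <= t]; the bound [t] is evaluated outside the binder, and the
   bound variable is index 0 in the body. *)
Inductive dformula : Type :=
| feq   : term -> term -> dformula
| fle   : term -> term -> dformula
| ffalse : dformula
| fnot  : dformula -> dformula
| fand  : dformula -> dformula -> dformula
| f_or  : dformula -> dformula -> dformula
| fimp  : dformula -> dformula -> dformula
| fallle : term -> dformula -> dformula
| fexle  : term -> dformula -> dformula.

Definition scons {A : Type} (a : A) (e : nat -> A) : nat -> A :=
  fun n => match n with 0 => a | S k => e k end.

Fixpoint teval (M : ArithModel) (e : nat -> car M) (t : term) : car M :=
  match t with
  | tvar n => e n
  | tzero => zero
  | tone => one
  | tadd a b => add (teval M e a) (teval M e b)
  | tmul a b => mul (teval M e a) (teval M e b)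
  end.

Fixpoint sat (M : ArithModel) (e : nat -> car M) (f : dformula) : Prop :=
  match f with
  | feq a b => teval M e a = teval M e b
  | fle a b => le M (teval M e a) (teval M e b)
  | ffalse => False
  | fnot g => ~ sat M e g
  | fand g h => sat M e g /\ sat M e h
  | f_or g h => sat M e g \/ sat M e h
  | fimp g h => sat M e g -> sat M e h
  | fallle t g => forall x, le M x (teval M e t) -> sat M (scons x e) g
  | fexle t g => exists x, le M x (teval M e t) /\ sat M (scons x e) g
  end.

Record IDelta0 (M : ArithModel) : Prop := {
  succ_ne_zero : forall x : car M, add x one <> zero;
  succ_inj     : forall x y : car M, add x one = add y one -> x = y;
  zero_or_succ : forall x : car M, x = zero \/ exists y, x = add y one;
  add_zero     : forall x : car M, add x zero = x;
  add_succ     : forall x y : car M, add x (add y one) = add (add x y) one;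
  mul_zero     : forall x : car M, mul x zero = zero;
  mul_succ     : forall x y : car M, mul x (add y one) = add (mul x y) x;
  definite_induction : forall (f : dformula) (e : nat -> car M),
      sat M (scons zero e) f ->
      (forall x, sat M (scons x e) f -> sat M (scons (add x one) e) f) ->
      forall x, sat M (scons x e) f
}.

Record accessibility (M : ArithModel) (acc : car M -> Prop) : Prop := {
  acc_zero : acc zero;
  acc_one  : acc one;
  acc_add  : forall x y, acc x -> acc y -> acc (add x y);
  acc_mul  : forall x y, acc x -> acc y -> acc (mul x y);
  acc_down : forall x y, le M y x -> acc x -> acc y;
  huge_exists : exists n, ~ acc n
}.

From Stdlib Require Import Classical.

(* Overspill.  The accessible numbers contain 0 and are closed under successor,
   so by definite induction they cannot be carved out by a definite objective
   condition: that would make every number accessible.  If [phi] held at no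
   huge number, it would carve them out exactly. *)

Section Accessibility.

Variable M : ArithModel.
Variable acc : car M -> Prop.
Hypothesis Hacc : accessibility M acc.

Lemma acc_succ (x : car M) : acc x -> acc (add x one).
Proof.
  intro Ax.
  exact (acc_add M acc Hacc x one Ax (acc_one M acc Hacc)).
Qed.

Lemma accessible_not_definite (HM : IDelta0 M) (phi : dformula) (e : nat -> car M) :
  ~ (forall x : car M, acc x <-> sat M (scons x e) phi).
Proof.
  intro Hdef.
  destruct (huge_exists M acc Hacc) as [h Hh].
  apply Hh, Hdef.
  apply (definite_induction M HM).
  - apply Hdef, (acc_zero M acc Hacc).
  - intros x Hx.
    apply Hdef, acc_succ, Hdef, Hx.
Qed.

End Accessibility.

Theorem mainTheorem2 (M : ArithModel) (HM : IDelta0 M)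
    (acc : car M -> Prop) (Hacc : accessibility M acc)
    (phi : dformula) (e : nat -> car M) :
  (forall n : car M, acc n -> sat M (scons n e) phi) ->
  exists n : car M, ~ acc n /\ sat M (scons n e) phi.
Proof.
  intro Hphi.
  apply NNPP; intro Hno_huge.
  apply (accessible_not_definite M acc Hacc HM phi e).
  intro x; split.
  - apply Hphi.
  - intro Hx.
    apply NNPP; intro Nx.
    apply Hno_huge; exists x; split; assumption.
Qed.
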